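(* Let $k\ge 3$ and let $G=(V,E)$ be a $k$-uniform hm-bipartite hypergraph with adjacency tensor $\mathcal A$. Then the spectrum of $\mathcal A$ is invariant under multiplication by any $k$-th root of unity: for every $\alpha\in\mathbb C$ with $\alpha^k=1$ and every $\lambda\in\mathbb C$, $\lambda$ is an eigenvalue of $\mathcal A$ if and only if $\alpha\lambda$ is, and they have the same algebraic multiplicity.
   Context: A $k$-uniform hypergraph $G=(V,E)$ has vertex set $V=[n]=\{1,\dots,n\}$ ($n\ge k$) and edge set $E$ consisting of $k$-element subsets of $V$. For $i\in V$, $E_i=\{e\in E: i\in e\}$ and $d_i=|E_i|$ is the degree of $i$. The adjacency tensor $\mathcal A=(a_{i_1\dots i_k})$ is the order-$k$, dimension-$n$ tensor with $a_{i_1\dots i_k}=\frac{1}{(k-1)!}$ if $\{i_1,\dots,i_k\}\in E$ and $0$ otherwise. For a tensor $\mathcal T=(t_{i_1\dots i_k})$ and $\mathbf x\in\mathbb C^n$, $\mathcal T\mathbf x^{k-1}\in\mathbb C^n$ has $i$-th entry $\sum_{i_2,\dots,i_k\in[n]}t_{ii_2\dots i_k}x_{i_2}\cdots x_{i_k}$; in particular $(\mathcal A\mathbf x^{k-1})_i=\sum_{e\in E_i}\prod_{j\in e\setminus\{i\}}x_j$. $\mathcal I$ denotes the identity tensor ($1$ exactly on the diagonal $i_1=\dots=i_k$). $\lambda\in\mathbb C$ is an eigenvalue of $\mathcal T$ with eigenvector $\mathbf x\in\mathbb C^n\setminus\{0\}$ if $(\lambda\mathcal I-\mathcal T)\mathbf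 x^{k-1}=0$, i.e. $(\mathcal T\mathbf x^{k-1})_i=\lambda x_i^{k-1}$ for all $i$. The characteristic polynomial is $\chi_{\mathcal T}(\lambda)=\mathrm{Det}(\lambda\mathcal I-\mathcal T)$, where $\mathrm{Det}$ is the tensor determinant (the resultant of the polynomial system $\mathcal T\mathbf x^{k-1}=0$, normalized so $\mathrm{Det}(\mathcal I)=1$); it is monic of degree $n(k-1)^{n-1}$, its roots are exactly the eigenvalues, and the algebraic multiplicity of an eigenvalue is its multiplicity as a root. The spectrum is the multiset of roots. $G$ is hm-bipartite if either $E=\emptyset$ or there is a partition $V=V_1\cup V_2$ with $V_1,V_2\neq\emptyset$ such that every edge $e\in E$ satisfies $|e\cap V_1|=1$ (and hence $|e\cap V_2|=k-1$). *)

From HB Require Import structures.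
From mathcomp Require Import all_boot all_order all_algebra all_fingroup.
Set Implicit Arguments. Unset Strict Implicit. Unset Printing Implicit Defensive.
Import Order.TTheory GRing.Theory Num.Theory.
Local Open Scope ring_scope.

(* The entry t_{i i_2 ... i_k} is represented as  T i f  where             *)
(* f : {ffun 'I_(k.-1) -> 'I_n} lists (i_2, ..., i_k).                      *)
Definition tensor (C : Type) (n k : nat) := 'I_n -> {ffun 'I_k.-1 -> 'I_n} -> C.

Definition tapply (C : fieldType) (n k : nat) (T : tensor C n k)
    (x : 'I_n -> C) (i : 'I_n) : C :=
  \sum_(f : {ffun 'I_k.-1 -> 'I_n}) T i f * \prod_(j < k.-1) x (f j).

Definition is_eigenvalue (C : fieldType) (n k : nat) (T : tensor C n k)
    (lam : C) : Prop :=
  exists x : {ffun 'I_n -> C}, x != 0 /\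
    forall i, tapply T x i = lam * x i ^+ k.-1.

Definition k_uniform (n k : nat) (E : {set {set 'I_n}}) : Prop :=
  forall e, e \in E -> #|e| = k.

Definition adj_tensor (C : fieldType) (n k : nat) (E : {set {set 'I_n}})
    : tensor C n k :=
  fun i f => if (i |: [set f j | j : 'I_k.-1]) \in E
             then ((k.-1)`!%:R)^-1 else 0.

Definition hm_bipartite (n k : nat) (E : {set {set 'I_n}}) : Prop :=
  E = set0 \/
  exists V1 : {set 'I_n}, V1 != set0 /\ ~: V1 != set0 /\
    forall e, e \in E -> #|e :&: V1| = 1%N.

(* chi_T(lambda) = Det(lambda I - T) = Res(F_1,...,F_n) where              *)
(*   F_i(x) = lambda x_i^{d} - (T x^{d})_i ,  d = k-1,                      *)
(* viewed as homogeneous polynomials of degree d in x with coefficients in *)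
(* C[lambda].  The resultant is computed by Macaulay's formula             *)
(* (Cox-Little-O'Shea, Using Algebraic Geometry, Ch.3 Thm 4.9):            *)
(*   Res = det M / det M'                                                   *)
(* which holds as an identity of polynomials in the generic coefficients,  *)
(* hence after specialization (det M' is a nonzero polynomial in lambda,   *)
(* with leading term a power of lambda), so the quotient is exact.         *)

(* coefficient (in C[lambda]) of the monomial x^b in F_i *)
Definition Fcoef (C : fieldType) (n k : nat) (T : tensor C n k)
    (i : 'I_n) (b : 'I_n -> nat) : {poly C} :=
  ([forall j, b j == ((j == i) * k.-1)%N])%:R *: 'X
  - (\sum_(f : {ffun 'I_k.-1 -> 'I_n} |
            [forall j, #|[set m | f m == j]| == b j]) T i f)%:P.

(* Macaulay degree D = sum_i (d_i - 1) + 1 *)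
Definition mac_deg (n k : nat) : nat := (n * (k.-1).-1).+1.

Definition mono (n k : nat) := {ffun 'I_n -> 'I_(mac_deg n k).+1}.

Definition monoD (n k : nat) : {set mono n k} :=
  [set a : mono n k | (\sum_j (a j : nat) == mac_deg n k)%N].

(* Macaulay matrix: row x^a is  (x^a / x_i^d) F_i  with i the first index *)
(* (smallest index, enum 'I_n is increasing) such that x_i^d divides x^a; entry in column x^g is the coefficient.    *)
Definition mac_mx (C : fieldType) (n k : nat) (T : tensor C n k)
    (a g : mono n k) : {poly C} :=
  match ohead [seq i <- enum 'I_n | (k.-1 <= a i)%N] with
  | Some i =>
      let sh := fun j : 'I_n => ((a j : nat) - (j == i) * k.-1)%N in
      if [forall j, (sh j <= g j)%N]
      then Fcoef T i (fun j => ((g j : nat) - sh j)%N)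
      else 0
  | None => 0
  end.

Definition reduced (n k : nat) (a : mono n k) : bool :=
  #|[set j : 'I_n | (k.-1 <= a j)%N]| == 1%N.

Definition monoD' (n k : nat) : {set mono n k} :=
  [set a in monoD n k | ~~ reduced a].

Definition detS (R : comRingType) (I : finType) (S : {set I})
    (A : I -> I -> R) : R :=
  \sum_(s : {perm I} | perm_on S s) (-1) ^+ s * \prod_(i in S) A i (s i).

Definition charpoly (C : fieldType) (n k : nat) (T : tensor C n k)
    : {poly C} :=
  detS (monoD n k) (mac_mx T) %/ detS (monoD' n k) (mac_mx T).

Definition alg_mult (C : fieldType) (n k : nat) (T : tensor C n k)
    (lam : C) : nat := mup lam (charpoly T).

From HB Require Import structures.
From mathcomp Require Import all_boot all_order all_algebra all_fingroup.
From mathcomp Require Import zify ring.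
Import Order.TTheory GRing.Theory Num.Theory.
Local Open Scope ring_scope.

(* Let V1 be the distinguished part: every edge meets V1 in exactly one
   vertex.  For a nonzero entry a_{i i_2 .. i_k} of the adjacency tensor this
   says that exactly one of i, i_2, ..., i_k lies in V1.  Write w(x^b) for
   the V1-weight (total degree in the variables x_j, j in V1) of a monomial.
   Fix beta with beta^k = 1.
   - Eigenvalues: if A x^{k-1} = lam x^{[k-1]}, then y_j = beta^[j in V1] x_j
     satisfies A y^{k-1} = (beta lam) y^{[k-1]}.
   - Multiplicities: substituting lam := beta lam multiplies the (i,b)
     coefficient of F_i = lam x_i^{k-1} - (A x^{k-1})_i by a factor depending
     only on w(b) and on whether i in V1; hence every Macaulay matrix entry
     M(a,g) is multiplied by beta * beta^w(a) / beta^w(g).  This is a diagonal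
     similarity, so both Macaulay minors, and thus chi, are multiplied by
     nonzero constants: chi(beta X) = c chi(X).  Such a polynomial has the same
     root multiplicity at lam and at beta^-1 lam. *)

Lemma sum_indicator_card (T : finType) (A B : {set T}) :
  (\sum_(x in A) (x \in B : nat))%N = #|A :&: B|.
Proof.
rewrite -sum1_card [in RHS]big_mkcond [in LHS]big_mkcond /=.
by apply: eq_bigr => x _; rewrite inE; case: (x \in A); case: (x \in B).
Qed.

Lemma sum_fibres_card n d (V1 : {set 'I_n}) (f : {ffun 'I_d -> 'I_n}) :
  (\sum_(j in V1) #|[set m | f m == j]|)%N = (\sum_(m < d) (f m \in V1 : nat))%N.
Proof.
have -> : (\sum_(m < d) (f m \in V1 : nat))%N = (\sum_(m | f m \in V1) 1)%N.
  by rewrite [RHS]big_mkcond; apply: eq_bigr => m _; case: (f m \in V1).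
rewrite (partition_big (fun m => f m) (fun j => j \in V1)) //.
apply: eq_bigr => j jV; rewrite -sum1dep_card; apply: eq_bigl => m.
by case: (f m =P j) => [->|]; rewrite ?jV ?andbF.
Qed.

Lemma sum_delta_in n (V1 : {set 'I_n}) (i : 'I_n) d :
  (\sum_(j in V1) ((j == i) * d))%N = ((i \in V1) * d)%N.
Proof.
rewrite big_mkcond (bigD1 i) //= big1 ?addn0.
  by case: (i \in V1); rewrite /= ?eqxx ?mul1n ?mul0n.
by move=> j /negbTE ->; case: (j \in V1).
Qed.

Definition weight {n} (V1 : {set 'I_n}) (b : 'I_n -> nat) : nat :=
  (\sum_(j in V1) b j)%N.

Lemma root_unity_neq0 {C : fieldType} {k : nat} {beta : C} :
  (0 < k)%N -> beta ^+ k = 1 -> beta != 0.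
Proof.
move=> k0 bk; apply/negP => /eqP b0; move: bk.
by rewrite b0 expr0n eqn0Ngt k0 /= => /eqP; rewrite eq_sym oner_eq0.
Qed.

(* Composition with a fixed polynomial is a ring morphism, so it commutes
   with the Leibniz determinant of a principal submatrix. *)
Lemma detS_comp (C : fieldType) (I : finType) (S : {set I})
    (M : I -> I -> {poly C}) (q : {poly C}) :
  detS S M \Po q = detS S (fun a g => M a g \Po q).
Proof.
rewrite /detS (big_morph (fun p => p \Po q) (fun p r => comp_polyD p r q) (comp_poly0 q)).
apply: eq_bigr => s _; rewrite comp_polyM.
rewrite (big_morph (fun p => p \Po q) (fun p r => comp_polyM p r q)
            (comp_polyC 1 q : 1%:P \Po q = 1%:P)).
congr (_ * _).
by case: (odd_perm s); rewrite ?expr1 ?expr0 -?polyC1 -?polyCN comp_polyC.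
Qed.

Lemma detS_ext (R : comNzRingType) (I : finType) (S : {set I}) (M M' : I -> I -> R) :
  (forall a g, M a g = M' a g) -> detS S M = detS S M'.
Proof. by move=> h; apply: eq_bigr => s _; congr (_ * _); apply: eq_bigr. Qed.

Lemma detS_diag_similar (C : fieldType) (I : finType) (S : {set I})
    (M : I -> I -> {poly C}) (beta : C) (u : I -> C) :
  (forall a, u a != 0) ->
  detS S (fun a g => (beta * u a / u g) *: M a g) = beta ^+ #|S| *: detS S M.
Proof.
move=> u0; rewrite /detS scaler_sumr; apply: eq_bigr => s hs.
rewrite scalerAr scaler_prod; congr (_ * _); congr (_ *: _).
rewrite prodf_div big_split /= prodr_const.
have -> : \prod_(a in S) u (s a) = \prod_(a in S) u a.
  rewrite [RHS](reindex_inj (@perm_inj _ s)); apply: eq_bigl => a.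
  by rewrite (perm_closed _ hs).
by rewrite mulfK // prodf_seq_neq0; apply/allP => a _; rewrite u0 implybT.
Qed.

Lemma divp_comp_scaleX (C : fieldType) (P Q : {poly C}) (beta : C) : beta != 0 ->
  (P %/ Q) \Po (beta *: 'X) = (P \Po (beta *: 'X)) %/ (Q \Po (beta *: 'X)).
Proof.
move=> b0; have [->|Q0] := eqVneq Q 0; first by rewrite divp0 comp_poly0 divp0.
have size_bX : size (beta *: 'X) = 2%N by rewrite size_scale // size_polyX.
apply: (@divpP _ _ _ _ ((P %% Q) \Po (beta *: 'X))).
  by rewrite -comp_polyM -comp_polyD -divp_eq.
by rewrite !size_comp_poly2 // ltn_modp.
Qed.

Lemma mup0 (C : fieldType) (x : C) : mup x 0 = 0%N.
Proof.
rewrite /mup; case: arg_maxnP => [|i _ _]; first by rewrite dvdp0.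
by case: i => [[|m]] //=; rewrite size_poly0.
Qed.

Lemma comp_scaleX_XsubC_exp (C : fieldType) (beta lam : C) (m : nat) :
  beta != 0 ->
  (('X - lam%:P) ^+ m) \Po (beta *: 'X) = beta ^+ m *: ('X - (beta^-1 * lam)%:P) ^+ m.
Proof.
move=> b0; have lin : beta *: 'X - lam%:P = beta *: ('X - (beta^-1 * lam)%:P).
  by rewrite scalerBr scale_polyC mulrA mulfV // mul1r.
elim: m => [|m ih]; first by rewrite !expr0 scale1r comp_polyC.
rewrite exprS comp_polyM ih comp_polyB comp_polyX comp_polyC lin.
by rewrite -scalerAl -scalerAr scalerA -!exprS.
Qed.

(* If p(beta X) is a nonzero multiple of p, then every factor (X - lam)^m
   of p yields a factor (X - lam/beta)^m. *)
Lemma mup_comp_scaleX {C : fieldType} {p : {poly C}} {beta c : C} (lam : C) :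
  beta != 0 -> c != 0 -> p \Po (beta *: 'X) = c *: p ->
  (mup lam p <= mup (beta^-1 * lam) p)%N.
Proof.
move=> b0 c0 hp; have [->|p0] := eqVneq p 0; first by rewrite !mup0.
have /dvdpP[r] : ('X - lam%:P) ^+ mup lam p %| p by rewrite -mup_geq.
rewrite mup_geq //; move: (mup lam p) => m hr.
have -> : p = c^-1 *: (p \Po (beta *: 'X)) by rewrite hp scalerA mulVf // scale1r.
rewrite hr comp_polyM comp_scaleX_XsubC_exp // -scalerAr scalerA scalerAl.
exact: dvdp_mull.
Qed.

Section HmBipartite.

Variables (C : fieldType) (n k : nat) (E : {set {set 'I_n}}) (V1 : {set 'I_n}).
Hypothesis k_gt0 : (0 < k)%N.
Hypothesis E_uniform : @k_uniform n k E.
Hypothesis E_meets_V1_once : forall e, e \in E -> #|e :&: V1| = 1%N.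

Local Notation A := (@adj_tensor C n k E).

(* For an edge {i, f 0, ..., f (k-2)} the k listed vertices are distinct,
   so exactly one of them lies in V1. *)
Lemma edge_one_in_V1 {i : 'I_n} {f : {ffun 'I_k.-1 -> 'I_n}} :
  (i |: [set f j | j : 'I_k.-1]) \in E ->
  (\sum_(m < k.-1) (f m \in V1 : nat) + (i \in V1))%N = 1%N.
Proof.
move=> hE; have := E_uniform _ hE; rewrite cardsU1 => hc.
have hX : (#|[set f j | j : 'I_k.-1]| <= k.-1)%N
  by rewrite (leq_trans (leq_imset_card _ _)) // card_ord.
have iX : i \notin [set f j | j : 'I_k.-1].
  by apply/negP => iX; move: hc hX; rewrite iX /=; move: (#|_|) => c; lia.
have cX : #|[set f j | j : 'I_k.-1]| = #|'I_k.-1|.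
  by rewrite card_ord; move: hc hX; rewrite iX /=; move: (#|_|) => c; lia.
have f_inj : {in 'I_k.-1 &, injective f} by apply/imset_injP; rewrite cX.
rewrite -(E_meets_V1_once _ hE) -sum_indicator_card big_setU1 //= addnC.
by congr (_ + _)%N; rewrite big_imset.
Qed.

Lemma adj_tensor_neq0_edge {i : 'I_n} {f : {ffun 'I_k.-1 -> 'I_n}} :
  A i f != 0 -> (i |: [set f j | j : 'I_k.-1]) \in E.
Proof. by rewrite /adj_tensor; case: ifP => //; rewrite eqxx. Qed.

Lemma tapply_rescale (beta : C) (x : 'I_n -> C) (i : 'I_n) :
  tapply A (fun j => beta ^+ (j \in V1) * x j) i
  = beta ^+ (i \notin V1) * tapply A x i.
Proof.
rewrite /tapply mulr_sumr; apply: eq_bigr => f _.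
have [->|Af] := eqVneq (A i f) 0; first by rewrite !mul0r mulr0.
have := edge_one_in_V1 (adj_tensor_neq0_edge Af).
rewrite big_split /= prodrXr mulrCA.
move: (\sum_(m < k.-1) (f m \in V1 : nat))%N => s h; congr (_ ^+ _ * _).
by move: h; case: (i \in V1) => /= h; lia.
Qed.

Lemma eigenvalue_rotate (beta lam : C) : beta ^+ k = 1 ->
  is_eigenvalue A lam -> is_eigenvalue A (beta * lam).
Proof.
move=> bk [x [x_neq0 eig]]; have kk := ltn_predK k_gt0.
have b0 := root_unity_neq0 k_gt0 bk.
exists [ffun j => beta ^+ (j \in V1) * x j]; split.
  apply: contra x_neq0 => /eqP y0; apply/eqP/ffunP => j.
  have /eqP := congr1 (fun f : {ffun 'I_n -> C} => f j) y0.
  by rewrite !ffunE mulf_eq0 expf_eq0 (negbTE b0) andbF /= => /eqP.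
move=> i; have -> : tapply A [ffun j => beta ^+ (j \in V1) * x j] i
    = tapply A (fun j => beta ^+ (j \in V1) * x j) i.
  by apply: eq_bigr => f _; congr (_ * _); apply: eq_bigr => m _; rewrite ffunE.
rewrite tapply_rescale eig ffunE exprMn.
case: (i \in V1) => /=; last by rewrite expr1 expr0 expr1n mul1r mulrA.
rewrite expr0 mul1r.
rewrite (_ : beta * lam * (beta ^+ k.-1 * x i ^+ k.-1)
   = (beta * beta ^+ k.-1) * (lam * x i ^+ k.-1)); last by ring.
by rewrite -exprS kk bk mul1r.
Qed.

Lemma Fcoef_rescale (beta : C) (i : 'I_n) (b : 'I_n -> nat) : beta ^+ k = 1 ->
  Fcoef A i b \Po (beta *: 'X)
  = (beta ^+ (1 + k.-1 * (i \in V1)) / beta ^+ (weight V1 b)) *: Fcoef A i b.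
Proof.
move=> bk; have kk := ltn_predK k_gt0; have b0 := root_unity_neq0 k_gt0 bk.
rewrite /Fcoef comp_polyB comp_polyZ comp_polyX comp_polyC scalerBr; congr (_ - _).
  case hc: [forall j, b j == ((j == i) * k.-1)%N]; last by rewrite !scale0r scaler0.
  rewrite scale1r scalerA mulr1; congr (_ *: _).
  have -> : weight V1 b = ((i \in V1) * k.-1)%N.
    by rewrite /weight -sum_delta_in; apply: eq_bigr => j _; exact/eqP/(forallP hc).
  by rewrite mulnC exprD mulfK ?expr1 // expf_neq0.
case: (pickP (fun f : {ffun 'I_k.-1 -> 'I_n} =>
        [forall j, #|[set m | f m == j]| == b j] && (A i f != 0))) => [f | none].
  case/andP=> fb Af; have := edge_one_in_V1 (adj_tensor_neq0_edge Af).
  have -> : weight V1 b = (\sum_(m < k.-1) (f m \in V1 : nat))%N.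
    by rewrite /weight -sum_fibres_card; apply: eq_bigr => j _; exact/esym/eqP/(forallP fb).
  move: (\sum_(m < k.-1) (f m \in V1 : nat))%N => s.
  case: (i \in V1) => /= hs.
    have -> : s = 0%N by lia.
    by rewrite muln1 add1n kk bk expr0 divr1 scale1r.
  have -> : s = 1%N by lia.
  by rewrite muln0 divff ?expr1 // scale1r.
rewrite big1 ?scaler0 //= => f fb; move: (none f); rewrite fb /=.
by move/negbFE/eqP.
Qed.

(* Hence each Macaulay matrix entry M(a,g) is multiplied by
   beta * beta^w(a) / beta^w(g): a diagonal similarity. *)
Lemma mac_mx_rescale (beta : C) (a g : mono n k) : beta ^+ k = 1 ->
  mac_mx A a g \Po (beta *: 'X)
  = (beta * beta ^+ weight V1 (fun j => a j : nat)
       / beta ^+ weight V1 (fun j => g j : nat)) *: mac_mx A a g.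
Proof.
move=> bk; have b0 := root_unity_neq0 k_gt0 bk.
rewrite /mac_mx.
case hs: (ohead [seq i <- enum 'I_n | (k.-1 <= a i)%N]) => [i|]; last first.
  by rewrite comp_poly0 scaler0.
have : i \in [seq i <- enum 'I_n | (k.-1 <= a i)%N].
  by move: hs; case: [seq _ <- _ | _] => //= x s [->]; rewrite inE eqxx.
rewrite mem_filter => /andP[ai _].
case: ifP => shift_le_g; last by rewrite comp_poly0 scaler0.
rewrite Fcoef_rescale //; congr (_ *: _).
set wb := weight V1 _.
set wsh := weight V1 (fun j => (a j - (j == i) * k.-1)%N).
have wg : (wb + wsh)%N = weight V1 (fun j => g j : nat).
  rewrite /wb /wsh /weight -big_split; apply: eq_bigr => j _ /=.
  by rewrite subnK //; exact: (forallP shift_le_g j).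
have wa : (wsh + (i \in V1) * k.-1)%N = weight V1 (fun j => a j : nat).
  rewrite /wsh /weight -sum_delta_in -big_split; apply: eq_bigr => j _ /=.
  by rewrite subnK //; case: (j =P i) => [->|]; rewrite ?mul1n ?mul0n.
rewrite -wg -wa !exprD mulnC.
have wb0 : beta ^+ wb != 0 by rewrite expf_neq0.
have wsh0 : beta ^+ wsh != 0 by rewrite expf_neq0.
by field; rewrite wb0 wsh0.
Qed.

Lemma charpoly_rescale {beta : C} : beta ^+ k = 1 ->
  exists2 c : C, c != 0 & charpoly A \Po (beta *: 'X) = c *: charpoly A.
Proof.
move=> bk; have b0 := root_unity_neq0 k_gt0 bk.
exists (beta ^+ #|monoD n k| / beta ^+ #|monoD' n k|).
  by rewrite mulf_neq0 ?invr_eq0 ?expf_neq0.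
have minor_rescale (S : {set mono n k}) :
    detS S (fun a g => mac_mx A a g \Po (beta *: 'X)) = beta ^+ #|S| *: detS S (mac_mx A).
  rewrite -(@detS_diag_similar C _ S _ beta (fun a => beta ^+ weight V1 (fun j => a j : nat))).
    by apply: detS_ext => a g; rewrite mac_mx_rescale.
  by move=> a; rewrite expf_neq0.
rewrite /charpoly divp_comp_scaleX // !detS_comp !minor_rescale.
by rewrite divpZl divpZr ?expf_neq0 // scalerA.
Qed.

(* Algebraic multiplicities are invariant under rotation by a k-th root of
   unity: apply the divisibility argument to beta^-1 and to beta. *)
Lemma alg_mult_rotate (beta lam : C) : beta ^+ k = 1 ->
  alg_mult A lam = alg_mult A (beta * lam).
Proof.
move=> bk; have b0 := root_unity_neq0 k_gt0 bk.
have bVk : beta^-1 ^+ k = 1 by rewrite exprVn bk invr1.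
have bV0 : beta^-1 != 0 by rewrite invr_eq0.
apply/eqP; rewrite eqn_leq; apply/andP; split.
  have [c c0 hc] := charpoly_rescale bVk.
  by have := mup_comp_scaleX lam bV0 c0 hc; rewrite invrK.
have [c c0 hc] := charpoly_rescale bk.
by have := mup_comp_scaleX (beta * lam) b0 c0 hc; rewrite mulKf.
Qed.

End HmBipartite.

Theorem proposition3p1 (C : numClosedFieldType) (n k : nat)
    (E : {set {set 'I_n}}) :
  (3 <= k)%N -> (k <= n)%N ->
  @k_uniform n k E -> @hm_bipartite n k E ->
  forall alpha lam : C, alpha ^+ k = 1 ->
    (is_eigenvalue (@adj_tensor C n k E) lam <->
     is_eigenvalue (@adj_tensor C n k E) (alpha * lam)) /\
    alg_mult (@adj_tensor C n k E) lam = alg_mult (@adj_tensor C n k E) (alpha * lam).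
Proof.
move=> k3 _ E_uniform E_bip alpha lam ak.
have k_gt0 : (0 < k)%N by apply: leq_trans k3.
(* An empty edge set is hm-bipartite for any V1, e.g. V1 = set0. *)
have [V1 EV1] : exists V1 : {set 'I_n}, forall e, e \in E -> #|e :&: V1| = 1%N.
  case: E_bip => [->|[V1 [_ [_ h]]]]; last by exists V1.
  by exists set0 => e; rewrite in_set0.
have a0 := root_unity_neq0 k_gt0 ak.
have aVk : alpha^-1 ^+ k = 1 by rewrite exprVn ak invr1.
have eig_rot := @eigenvalue_rotate C n k E V1 k_gt0 E_uniform EV1.
have mult_rot := @alg_mult_rotate C n k E V1 k_gt0 E_uniform EV1.
split; last exact: mult_rot.
split; first exact: eig_rot.
by move=> /(eig_rot _ _ aVk); rewrite mulKf.
Qed.
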